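(* Let $(X,d)$ be a pointed metric space, let $((x_i,y_i))_{i\in I}$ be a Lipschitz interpolating family in $\widetilde X$ for $\mathrm{Lip}_0(X)$ with Lipschitz interpolation constant $M$, let $T:\mathrm{Lip}_0(X)\to\ell_\infty(I)$ be its Lipschitz interpolating operator, and let $S:\ell_1(I)\to\mathcal F(X)$ be $S(\lambda)=\sum_{i\in I}\lambda_i m_{x_i,y_i}$. The following statements are equivalent: (i) There exists a Beurling set $(f_i)_{i\in I}$ of functions in $\mathrm{Lip}_0(X)$ for $((x_i,y_i))_{i\in I}$. (ii) There exists a bounded linear operator $R:\ell_\infty(I)\to\mathrm{Lip}_0(X)$ which is weak*-to-weak* continuous, with $\|R\|=M$ and $T\circ R=\mathrm{Id}_{\ell_\infty(I)}$. (iii) There exists a bounded linear operator $P:\mathcal F(X)\to\ell_1(I)$ with $\|P\|=M$ and $P\circ S=\mathrm{Id}_{\ell_1(I)}$. (iv) There exists a Lipschitz map $f:X\to\ell_1(I)$ with $f(0)=0$, Lipschitz constant $\|f\|=M$, and $\dfrac{f(x_i)-f(y_i)}{d(x_i,y_i)}=e_i$ for all $i\in I$. (v) There exists a bounded linear operator $R_0:c_0(I)\to\mathrm{Lip}_0(X)$ with $\|R_0\|\leq M$ and $T\circ R_0=\mathrm{Id}_{c_0(I)}$.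
   Context: All spaces are real. $(X,d)$ is a metric space with base point $0$, $\widetilde{X}=\{(x,y)\in X\times X: x\neq y\}$. $\mathrm{Lip}_0(X)$ is the Banach space of Lipschitz $f:X\to\mathbb{R}$ with $f(0)=0$, normed by $\|f\|=\sup_{(x,y)\in\widetilde X}|f(x)-f(y)|/d(x,y)$; similarly for Banach-space-valued maps with $\|\cdot\|$ in place of $|\cdot|$. For $x\in X$, $\delta_x\in\mathrm{Lip}_0(X)^*$ is $\delta_x(f)=f(x)$; the Lipschitz-free space $\mathcal F(X)$ is the closed linear span of $\{\delta_x\}$ in $\mathrm{Lip}_0(X)^*$, and $\mathrm{Lip}_0(X)$ is identified with $\mathcal F(X)^*$ (weak* topology accordingly); $\ell_\infty(I)=\ell_1(I)^*$. For $(x,y)\in\widetilde X$, $m_{x,y}=(\delta_x-\delta_y)/d(x,y)$. $e_i$ are the unit vectors of $\ell_1(I)$. For a family $((x_i,y_i))_{i\in I}$ in $\widetilde X$, $T(f)=\big((f(x_i)-f(y_i))/d(x_i,y_i)\big)_{i\in I}$; the family is Lipschitz interpolating for $\mathrm{Lip}_0(X)$ if $T:\mathrm{Lip}_0(X)\to\ell_\infty(I)$ is surjective, and then its Lipschitz interpolation constant is $M=\inf\{K\geq 1: \forall \alpha\in\ell_\infty(I), \|\alpha\|_\infty\le1,\ \exists f\in\mathrm{Lip}_0(X),\ \|f\|\le K,\ T(f)=\alpha\}$ (note $T$ maps $\mathrm{Lip}_0(X)$ into $\ell_\infty(I)\supseteq c_0(I)$). A Beurling set of functions in $\mathrm{Lip}_0(X)$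 for such a family is a family $(f_i)_{i\in I}$ of functions $f_i:X\to\mathbb R$ with $f_i(0)=0$, $(f_i(x_j)-f_i(y_j))/d(x_j,y_j)=\delta_{ij}$ for all $i,j\in I$, and $\sup_{(x,y)\in\widetilde X}\sum_{i\in I}|f_i(x)-f_i(y)|/d(x,y)\leq M$. *)

From Stdlib Require Import Reals Lra List ClassicalEpsilon.
Open Scope R_scope.
Set Implicit Arguments.

Definition lsum {I : Type} (a : I -> R) (L : list I) : R :=
  fold_right (fun i acc => a i + acc) 0 L.

(* [a] has unordered sum [s]: net convergence of finite partial sums. *)
Definition has_sum {I : Type} (a : I -> R) (s : R) : Prop :=
  forall eps, 0 < eps -> exists L0 : list I, NoDup L0 /\
    forall L : list I, NoDup L -> incl L0 L -> Rabs (lsum a L - s) <= eps.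

(* The value of the unordered sum (0 if it does not exist). *)
Definition usum {I : Type} (a : I -> R) : R :=
  epsilon (inhabits 0) (fun s => has_sum a s).

Definition is_metric {X : Type} (d : X -> X -> R) : Prop :=
  (forall x y, 0 <= d x y) /\
  (forall x y, d x y = 0 <-> x = y) /\
  (forall x y, d x y = d y x) /\
  (forall x y z, d x z <= d x y + d y z).

(** * Norm bounds in the various spaces ("||v|| <= c") *)

Definition linf_le {I : Type} (a : I -> R) (c : R) : Prop := forall i, Rabs (a i) <= c.
Definition linf {I : Type} (a : I -> R) : Prop := exists c, linf_le a c.

Definition c0 {I : Type} (a : I -> R) : Prop :=
  forall eps, 0 < eps -> exists L : list I, forall i, eps <= Rabs (a i) -> In i L.

Definition l1_le {I : Type} (l : I -> R) (c : R) : Prop :=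
  forall L : list I, NoDup L -> lsum (fun i => Rabs (l i)) L <= c.
Definition l1 {I : Type} (l : I -> R) : Prop := exists c, l1_le l c.

Definition lip_le {X : Type} (d : X -> X -> R) (f : X -> R) (c : R) : Prop :=
  forall x y, Rabs (f x - f y) <= c * d x y.
Definition lip0 {X : Type} (d : X -> X -> R) (x0 : X) (f : X -> R) : Prop :=
  f x0 = 0 /\ exists c, lip_le d f c.

Definition dual_le {X : Type} (d : X -> X -> R) (x0 : X) (phi : (X -> R) -> R) (c : R) : Prop :=
  forall f K, lip0 d x0 f -> 0 <= K -> lip_le d f K -> Rabs (phi f) <= c * K.

Definition delta {X : Type} (x : X) : (X -> R) -> R := fun f => f x.
Definition comb_delta {X : Type} (c : list (R * X)) : (X -> R) -> R :=
  fun f => fold_right (fun p acc => fst p * f (snd p) + acc) 0 c.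

(* Lipschitz-free space F(X): closure in Lip_0(X)^* of span{delta_x} *)
Definition Fmem {X : Type} (d : X -> X -> R) (x0 : X) (phi : (X -> R) -> R) : Prop :=
  forall eps, 0 < eps -> exists c : list (R * X),
    dual_le d x0 (fun f => phi f - comb_delta c f) eps.

Definition molecule {X : Type} (d : X -> X -> R) (x y : X) : (X -> R) -> R :=
  fun f => (f x - f y) / d x y.

Definition linear_on {V W : Type} (dom : V -> Prop)
  (add : V -> V -> V) (scal : R -> V -> V)
  (weq : W -> W -> Prop) (addW : W -> W -> W) (scalW : R -> W -> W)
  (A : V -> W) : Prop :=
  forall a b u v, dom u -> dom v ->
    weq (A (add (scal a u) (scal b v))) (addW (scalW a (A u)) (scalW b (A v))).

Definition fadd {D : Type} (u v : D -> R) : D -> R := fun z => u z + v z.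
Definition fscal {D : Type} (a : R) (u : D -> R) : D -> R := fun z => a * u z.
Definition feq {D : Type} (u v : D -> R) : Prop := forall z, u z = v z.

Definition op_bounded {V W : Type} (dom : V -> Prop)
  (nV : V -> R -> Prop) (nW : W -> R -> Prop) (A : V -> W) (M : R) : Prop :=
  forall v c, dom v -> 0 <= c -> nV v c -> nW (A v) (M * c).

Definition op_norm_eq {V W : Type} (dom : V -> Prop)
  (nV : V -> R -> Prop) (nW : W -> R -> Prop) (A : V -> W) (M : R) : Prop :=
  op_bounded dom nV nW A M /\
  forall C, C < M -> ~ op_bounded dom nV nW A C.

Definition Top {X I : Type} (d : X -> X -> R) (xs ys : I -> X) (f : X -> R) : I -> R :=
  fun i => (f (xs i) - f (ys i)) / d (xs i) (ys i).

Definition Sop {X I : Type} (d : X -> X -> R) (xs ys : I -> X) (l : I -> R) : (X -> R) -> R :=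
  fun f => usum (fun i => l i * molecule d (xs i) (ys i) f).

Definition lip_interpolating {X I : Type} (d : X -> X -> R) (x0 : X) (xs ys : I -> X) : Prop :=
  forall a : I -> R, linf a -> exists f, lip0 d x0 f /\ feq (Top d xs ys f) a.

Definition is_glb (P : R -> Prop) (m : R) : Prop :=
  (forall K, P K -> m <= K) /\ (forall m', (forall K, P K -> m' <= K) -> m' <= m).

Definition interp_const {X I : Type} (d : X -> X -> R) (x0 : X) (xs ys : I -> X) (M : R) : Prop :=
  is_glb (fun K => 1 <= K /\ forall a : I -> R, linf_le a 1 ->
            exists f, lip0 d x0 f /\ lip_le d f K /\ feq (Top d xs ys f) a) M.

Definition beurling_set {X I : Type} (d : X -> X -> R) (x0 : X) (xs ys : I -> X) (M : R)
  (fs : I -> X -> R) : Prop :=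
  (forall i, fs i x0 = 0) /\
  (forall i, Top d xs ys (fs i) i = 1 /\ forall j, j <> i -> Top d xs ys (fs i) j = 0) /\
  (forall x y, x <> y -> l1_le (fun i => (fs i x - fs i y) / d x y) M).

(* weak*-to-weak* continuity of A : ell_infty(I) = ell_1(I)^* -> Lip_0(X) = F(X)^*,
   via basic weak* neighbourhoods *)
Definition wstar_continuous {X I : Type} (d : X -> X -> R) (x0 : X)
  (A : (I -> R) -> (X -> R)) : Prop :=
  forall a, linf a ->
  forall (phis : list ((X -> R) -> R)) eps,
    (forall phi, In phi phis -> Fmem d x0 phi) -> 0 < eps ->
    exists (lams : list (I -> R)) delta,
      (forall l, In l lams -> l1 l) /\ 0 < delta /\
      forall b, linf b ->
        (forall l, In l lams -> Rabs (usum (fun i => (b i - a i) * l i)) < delta) ->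
        forall phi, In phi phis -> Rabs (phi (A b) - phi (A a)) < eps.

Definition cond_i {X I : Type} (d : X -> X -> R) (x0 : X) (xs ys : I -> X) (M : R) : Prop :=
  exists fs : I -> X -> R, beurling_set d x0 xs ys M fs.

Definition cond_ii {X I : Type} (d : X -> X -> R) (x0 : X) (xs ys : I -> X) (M : R) : Prop :=
  exists Rop : (I -> R) -> (X -> R),
    (forall a, linf a -> lip0 d x0 (Rop a)) /\
    linear_on linf fadd fscal feq fadd fscal Rop /\
    wstar_continuous d x0 Rop /\
    op_norm_eq linf linf_le (lip_le d) Rop M /\
    (forall a, linf a -> feq (Top d xs ys (Rop a)) a).

Definition cond_iii {X I : Type} (d : X -> X -> R) (x0 : X) (xs ys : I -> X) (M : R) : Prop :=
  exists P : ((X -> R) -> R) -> (I -> R),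
    (forall phi, Fmem d x0 phi -> l1 (P phi)) /\
    linear_on (Fmem d x0) fadd fscal feq fadd fscal P /\
    op_norm_eq (Fmem d x0) (dual_le d x0) l1_le P M /\
    (forall l, l1 l -> feq (P (Sop d xs ys l)) l).

Definition cond_iv {X I : Type} (d : X -> X -> R) (x0 : X) (xs ys : I -> X) (M : R) : Prop :=
  exists f : X -> (I -> R),
    feq (f x0) (fun _ => 0) /\
    (forall x, l1 (f x)) /\
    (* Lipschitz constant of f : X -> ell_1(I) equals M *)
    ((forall x y, l1_le (fadd (f x) (fscal (-1) (f y))) (M * d x y)) /\
     forall C, C < M -> ~ (forall x y, l1_le (fadd (f x) (fscal (-1) (f y))) (C * d x y))) /\
    (forall i, (f (xs i) i - f (ys i) i) / d (xs i) (ys i) = 1 /\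
       forall j, j <> i -> (f (xs i) j - f (ys i) j) / d (xs i) (ys i) = 0).

Definition cond_v {X I : Type} (d : X -> X -> R) (x0 : X) (xs ys : I -> X) (M : R) : Prop :=
  exists R0 : (I -> R) -> (X -> R),
    (forall a, c0 a -> lip0 d x0 (R0 a)) /\
    linear_on c0 fadd fscal feq fadd fscal R0 /\
    op_bounded c0 linf_le (lip_le d) R0 M /\
    (forall a, c0 a -> feq (Top d xs ys (R0 a)) a).

From Stdlib Require Import Reals List Lra Classical ClassicalEpsilon FunctionalExtensionality Permutation.
Open Scope R_scope.

(** A Beurling set (f_i) is the same thing as a Lipschitz map x |-> (f_i x)_i into ell_1(I)
   with constant M that interpolates the unit vectors. Such a family makes b |-> sum_i b_i f_i
   converge absolutely, with Lipschitz constant at most M ||b||_oo; this is a right inverse of T,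
   and it is weak*-continuous because phi (sum_i b_i f_i) = sum_i b_i phi(f_i) for phi in F(X)
   (true for finite combinations of point evaluations, hence by density), while
   phi |-> (phi(f_i))_i is a left inverse of S. Conversely each operator in (ii)-(v) yields a
   Beurling set: f_i = R_0(e_i), tested on signed finite sums of unit vectors, or
   f_i(x) = P(delta_x)_i, or f_i(x) = f(x)_i. Norms are at least M in every case, since a right
   inverse of T of norm C interpolates with constant C. *)

Lemma Rabs_le_bounds (x B : R) : Rabs x <= B -> - B <= x <= B.
Proof. intros H. pose proof (Rle_abs x). pose proof (Rle_abs (- x)). rewrite Rabs_Ropp in *. lra. Qed.

Lemma Rdiv_le_iff (a b c : R) : 0 < c -> a / c <= b <-> a <= b * c.
Proof.
  intros Hc. split; intros H.
  - replace a with (a / c * c) by (field; lra). apply Rmult_le_compat_r; lra.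
  - replace b with (b * c / c) by (field; lra). unfold Rdiv.
    apply Rmult_le_compat_r; [left; apply Rinv_0_lt_compat|]; lra.
Qed.

Lemma eq0_of_Rabs_le_eps_mul (x A : R) :
  0 <= A -> (forall eps, 0 < eps -> Rabs x <= eps * A) -> x = 0.
Proof.
  intros HA H. destruct (Req_dec x 0) as [|Hx]; [assumption|]. exfalso.
  pose proof (Rabs_pos_lt x Hx) as Hpos.
  set (e := Rabs x / (2 * (A + 1))).
  assert (He : 0 < e) by (unfold e; apply Rdiv_lt_0_compat; lra).
  assert (Hsplit : e * A + e = Rabs x / 2) by (unfold e; field; lra).
  specialize (H e He). lra.
Qed.

Section FiniteSums.

Context {I : Type}.
Implicit Types (a b u : I -> R) (L : list I).

Lemma lsum_nil a : lsum a nil = 0.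
Proof. reflexivity. Qed.

Lemma lsum_cons a i L : lsum a (i :: L) = a i + lsum a L.
Proof. reflexivity. Qed.

Lemma lsum_ext a b L : (forall i, a i = b i) -> lsum a L = lsum b L.
Proof. intros H. induction L as [|i L IH]; [reflexivity|]. rewrite !lsum_cons, H, IH. reflexivity. Qed.

Lemma lsum_plus a b L : lsum (fun i => a i + b i) L = lsum a L + lsum b L.
Proof. induction L as [|i L IH]; [rewrite !lsum_nil; ring|]. rewrite !lsum_cons, IH. ring. Qed.

Lemma lsum_minus a b L : lsum (fun i => a i - b i) L = lsum a L - lsum b L.
Proof. induction L as [|i L IH]; [rewrite !lsum_nil; ring|]. rewrite !lsum_cons, IH. ring. Qed.

Lemma lsum_scal (c : R) a L : lsum (fun i => c * a i) L = c * lsum a L.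
Proof. induction L as [|i L IH]; [rewrite !lsum_nil; ring|]. rewrite !lsum_cons, IH. ring. Qed.

Lemma lsum_le a b L : (forall i, a i <= b i) -> lsum a L <= lsum b L.
Proof.
  intros H. induction L as [|i L IH]; [rewrite !lsum_nil; lra|].
  rewrite !lsum_cons. specialize (H i). lra.
Qed.

Lemma lsum_nonneg u L : (forall i, 0 <= u i) -> 0 <= lsum u L.
Proof.
  intros H. induction L as [|i L IH]; [rewrite lsum_nil; lra|].
  rewrite lsum_cons. specialize (H i). lra.
Qed.

Lemma lsum_abs a L : Rabs (lsum a L) <= lsum (fun i => Rabs (a i)) L.
Proof.
  induction L as [|i L IH]; [rewrite !lsum_nil, Rabs_R0; lra|].
  rewrite !lsum_cons. eapply Rle_trans; [apply Rabs_triang|]. lra.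
Qed.

Lemma lsum_div u (D : R) L : 0 < D ->
  lsum (fun i => Rabs (u i / D)) L = lsum (fun i => Rabs (u i)) L / D.
Proof.
  intros HD. unfold Rdiv. rewrite Rmult_comm, <- lsum_scal. apply lsum_ext. intros i.
  rewrite Rabs_mult, Rabs_inv, (Rabs_pos_eq D); [ring|lra].
Qed.

Lemma lsum_perm a L1 L2 : Permutation L1 L2 -> lsum a L1 = lsum a L2.
Proof. induction 1; rewrite ?lsum_cons; first [congruence | ring]. Qed.

Lemma lsum_zero u L : (forall i, In i L -> u i = 0) -> lsum u L = 0.
Proof.
  induction L as [|i L IH]; intros H; [reflexivity|].
  rewrite lsum_cons, H, IH; [ring| |left; reflexivity]. intros k Hk. apply H. right. exact Hk.
Qed.

Lemma lsum_single u j L :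
  NoDup L -> In j L -> (forall i, i <> j -> u i = 0) -> lsum u L = u j.
Proof.
  intros HL Hj Hu. induction HL as [|i L Hi HL IH]; [destruct Hj|].
  rewrite lsum_cons. destruct Hj as [<-|Hj].
  - rewrite lsum_zero; [ring|]. intros k Hk. apply Hu. intros ->. contradiction.
  - rewrite IH, (Hu i); [ring| |exact Hj]. intros ->. contradiction.
Qed.

Lemma lsum_in_ge u L i : (forall j, 0 <= u j) -> In i L -> u i <= lsum u L.
Proof.
  intros Hu Hi. induction L as [|k L IH]; [destruct Hi|]. rewrite lsum_cons.
  destruct Hi as [<-|Hi].
  - pose proof (lsum_nonneg u L Hu). lra.
  - specialize (IH Hi). specialize (Hu k). lra.
Qed.

Lemma lsum_incl u L0 L :
  (forall i, 0 <= u i) -> NoDup L0 -> NoDup L -> incl L0 L -> lsum u L0 <= lsum u L.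
Proof.
  intros Hu. revert L0. induction L as [|i L IH]; intros L0 H0 HL Hincl.
  - apply incl_l_nil in Hincl. subst. lra.
  - inversion HL as [|? ? Hi HL']; subst. rewrite lsum_cons.
    destruct (classic (In i L0)) as [Hin|Hout].
    + destruct (in_split _ _ Hin) as [l1 [l2 ->]].
      rewrite (lsum_perm u _ (i :: l1 ++ l2)) by (symmetry; apply Permutation_middle).
      rewrite lsum_cons. apply Rplus_le_compat_l, IH; [eapply NoDup_remove_1; eauto | exact HL' |].
      intros k Hk.
      assert (Hk' : In k (l1 ++ i :: l2)) by (apply in_app_or in Hk; apply in_or_app; simpl; tauto).
      destruct (Hincl k Hk') as [<-|HkL]; [|exact HkL].
      exfalso. exact (NoDup_remove_2 _ _ _ H0 Hk).
    + assert (lsum u L0 <= lsum u L); [|specialize (Hu i); lra].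
      apply IH; [exact H0 | exact HL' |].
      intros k Hk. destruct (Hincl k Hk) as [<-|HkL]; [contradiction | exact HkL].
Qed.

Lemma exists_NoDup_incl2 L1 L2 : exists L, NoDup L /\ incl L1 L /\ incl L2 L.
Proof.
  exists (nodup (fun x y => excluded_middle_informative (x = y)) (L1 ++ L2)).
  split; [apply NoDup_nodup|].
  split; intros x Hx; apply nodup_In, in_or_app; tauto.
Qed.

End FiniteSums.

Section UnorderedSums.

Context {I : Type}.
Implicit Types (a b u : I -> R).

Lemma has_sum_unique a s t : has_sum a s -> has_sum a t -> s = t.
Proof.
  intros Hs Ht. apply Rminus_diag_uniq, (eq0_of_Rabs_le_eps_mul _ 2); [lra|].
  intros e He. destruct (Hs e He) as [L1 [_ H1]]. destruct (Ht e He) as [L2 [_ H2]].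
  destruct (exists_NoDup_incl2 L1 L2) as [L [HL [I1 I2]]].
  pose proof (Rabs_le_bounds _ _ (H1 L HL I1)). pose proof (Rabs_le_bounds _ _ (H2 L HL I2)).
  apply Rabs_le. lra.
Qed.

Lemma usum_eq a s : has_sum a s -> usum a = s.
Proof.
  intros H. apply (has_sum_unique a); [|exact H].
  unfold usum. apply epsilon_spec. exists s. exact H.
Qed.

Lemma has_sum_ext a b s : (forall i, a i = b i) -> has_sum a s -> has_sum b s.
Proof. intros H. replace b with a; [tauto|]. apply functional_extensionality. exact H. Qed.

Lemma has_sum_zero : has_sum (fun _ : I => 0) 0.
Proof.
  intros e He. exists nil. split; [constructor|]. intros L _ _.
  rewrite lsum_zero by reflexivity. rewrite Rminus_0_r, Rabs_R0. lra.
Qed.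

Lemma has_sum_single a j : (forall i, i <> j -> a i = 0) -> has_sum a (a j).
Proof.
  intros H e He. exists (j :: nil). split; [constructor; [intros []|constructor]|].
  intros L HL Hincl. rewrite (lsum_single a j L HL (Hincl j (or_introl eq_refl)) H).
  rewrite Rminus_diag, Rabs_R0. lra.
Qed.

Lemma has_sum_lin a b s t (al be : R) :
  has_sum a s -> has_sum b t -> has_sum (fun i => al * a i + be * b i) (al * s + be * t).
Proof.
  intros Hs Ht e He. set (k := Rabs al + Rabs be + 1).
  assert (Hk : 0 < k) by (unfold k; pose proof (Rabs_pos al); pose proof (Rabs_pos be); lra).
  assert (He' : 0 < e / k) by (apply Rdiv_lt_0_compat; lra).
  destruct (Hs _ He') as [L1 [_ H1]]. destruct (Ht _ He') as [L2 [_ H2]].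
  destruct (exists_NoDup_incl2 L1 L2) as [L0 [N0 [I1 I2]]].
  exists L0. split; [exact N0|]. intros L NL IL.
  specialize (H1 L NL (incl_tran I1 IL)). specialize (H2 L NL (incl_tran I2 IL)).
  rewrite lsum_plus, !lsum_scal.
  replace (al * lsum a L + be * lsum b L - (al * s + be * t))
    with (al * (lsum a L - s) + be * (lsum b L - t)) by ring.
  eapply Rle_trans; [apply Rabs_triang|]. rewrite !Rabs_mult.
  pose proof (Rmult_le_compat_l _ _ _ (Rabs_pos al) H1).
  pose proof (Rmult_le_compat_l _ _ _ (Rabs_pos be) H2).
  assert (Hle : (Rabs al + Rabs be) * (e / k) <= k * (e / k))
    by (apply Rmult_le_compat_r; [lra | unfold k; lra]).
  replace (k * (e / k)) with e in Hle by (field; lra).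
  rewrite Rmult_plus_distr_r in Hle. lra.
Qed.

Lemma has_sum_sub a b s t :
  has_sum a s -> has_sum b t -> has_sum (fun i => a i - b i) (s - t).
Proof.
  intros Hs Ht. replace (s - t) with (1 * s + -1 * t) by ring.
  eapply has_sum_ext; [|exact (has_sum_lin _ _ _ _ 1 (-1) Hs Ht)]. intros i. cbv beta. ring.
Qed.

Lemma has_sum_Rabs_le a s C : has_sum a s ->
  (forall L, NoDup L -> lsum (fun i => Rabs (a i)) L <= C) -> Rabs s <= C.
Proof.
  intros Hs HC. apply Rnot_lt_le. intros Hlt.
  destruct (Hs ((Rabs s - C) / 2)) as [L [HL H]]; [lra|].
  specialize (H L HL (incl_refl L)). specialize (HC L HL).
  pose proof (lsum_abs a L). pose proof (Rabs_triang_inv s (lsum a L)) as Htri.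
  rewrite Rabs_minus_sym in Htri. lra.
Qed.

Lemma has_sum_of_nonneg u C : (forall i, 0 <= u i) ->
  (forall L, NoDup L -> lsum u L <= C) -> exists s, has_sum u s.
Proof.
  intros Hu HC. set (E := fun r => exists L, NoDup L /\ r = lsum u L).
  destruct (completeness E) as [m [Hub Hlub]].
  - exists C. intros r [L [HL ->]]. exact (HC L HL).
  - exists 0. exists nil. split; [constructor | reflexivity].
  - exists m. intros e He.
    destruct (classic (exists L0, NoDup L0 /\ m - e < lsum u L0)) as [[L0 [H0 Hlt]]|Hnone].
    + exists L0. split; [exact H0|]. intros L HL Hincl.
      pose proof (lsum_incl u L0 L Hu H0 HL Hincl).
      assert (lsum u L <= m) by (apply Hub; exists L; split; [exact HL | reflexivity]).
      rewrite Rabs_left1; lra.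
    + exfalso. assert (m <= m - e); [|lra]. apply Hlub. intros r [L [HL ->]].
      apply Rnot_lt_le. intros Hlt. apply Hnone. exists L. split; [exact HL | lra].
Qed.

Lemma has_sum_of_abs_bounded a C :
  (forall L, NoDup L -> lsum (fun i => Rabs (a i)) L <= C) -> exists s, has_sum a s.
Proof.
  intros HC.
  assert (Hpos : forall i, 0 <= Rmax (a i) 0 <= Rabs (a i))
    by (intros i; unfold Rmax, Rabs; destruct Rle_dec; destruct Rcase_abs; lra).
  assert (Hneg : forall i, 0 <= Rmax (- a i) 0 <= Rabs (a i))
    by (intros i; unfold Rmax, Rabs; destruct Rle_dec; destruct Rcase_abs; lra).
  destruct (has_sum_of_nonneg (fun i => Rmax (a i) 0) C) as [s1 H1].
  { intros i. apply Hpos. }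
  { intros L HL. eapply Rle_trans; [apply lsum_le; intros i; apply Hpos | exact (HC L HL)]. }
  destruct (has_sum_of_nonneg (fun i => Rmax (- a i) 0) C) as [s2 H2].
  { intros i. apply Hneg. }
  { intros L HL. eapply Rle_trans; [apply lsum_le; intros i; apply Hneg | exact (HC L HL)]. }
  exists (s1 - s2). eapply has_sum_ext; [|exact (has_sum_sub _ _ _ _ H1 H2)].
  intros i. cbv beta. unfold Rmax. destruct Rle_dec; destruct Rle_dec; lra.
Qed.

End UnorderedSums.

Section Lipschitz.

Context {X : Type} (d : X -> X -> R).

Lemma metric_nonneg : is_metric d -> forall x y, 0 <= d x y.
Proof. intros [H _]. exact H. Qed.

Lemma metric_refl : is_metric d -> forall x, d x x = 0.
Proof. intros [_ [H _]] x. apply H. reflexivity. Qed.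

Lemma metric_pos : is_metric d -> forall x y, x <> y -> 0 < d x y.
Proof.
  intros hd x y Hxy. destruct (metric_nonneg hd x y) as [|E]; [assumption|].
  exfalso. apply Hxy. destruct hd as [_ [H _]]. apply H. symmetry. exact E.
Qed.

Lemma lip_le_nonneg x0 f : is_metric d -> lip0 d x0 f -> exists K, 0 <= K /\ lip_le d f K.
Proof.
  intros hd [_ [c Hc]]. exists (Rmax c 0). split; [apply Rmax_r|]. intros x y.
  eapply Rle_trans; [apply Hc|]. apply Rmult_le_compat_r; [apply metric_nonneg, hd | apply Rmax_l].
Qed.

Lemma lip_le_comb f g Kf Kg a b : lip_le d f Kf -> lip_le d g Kg ->
  lip_le d (fadd (fscal a f) (fscal b g)) (Rabs a * Kf + Rabs b * Kg).
Proof.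
  intros Hf Hg x y. unfold fadd, fscal.
  pose proof (Rmult_le_compat_l _ _ _ (Rabs_pos a) (Hf x y)).
  pose proof (Rmult_le_compat_l _ _ _ (Rabs_pos b) (Hg x y)).
  replace (a * f x + b * g x - (a * f y + b * g y)) with (a * (f x - f y) + b * (g x - g y)) by ring.
  eapply Rle_trans; [apply Rabs_triang|]. rewrite !Rabs_mult. lra.
Qed.

Lemma lip0_zero x0 : lip0 d x0 (fun _ => 0).
Proof. split; [reflexivity|]. exists 0. intros x y. rewrite Rminus_diag, Rabs_R0. lra. Qed.

Lemma lip0_comb x0 f g a b : lip0 d x0 f -> lip0 d x0 g -> lip0 d x0 (fadd (fscal a f) (fscal b g)).
Proof.
  intros [Hf0 [Kf Hf]] [Hg0 [Kg Hg]]. split.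
  - unfold fadd, fscal. rewrite Hf0, Hg0. ring.
  - eexists. exact (lip_le_comb _ _ _ _ a b Hf Hg).
Qed.

End Lipschitz.

Definition scalar_linear_on {D : Type} (dom : (D -> R) -> Prop) (psi : (D -> R) -> R) : Prop :=
  linear_on dom fadd fscal eq Rplus Rmult psi.

Definition lcomb {D I : Type} (s : I -> R) (g : I -> D -> R) (L : list I) : D -> R :=
  fun z => lsum (fun i => s i * g i z) L.

Section FiniteCombinations.

Context {D I : Type} (s : I -> R) (g : I -> D -> R).

Lemma lcomb_cons i L : lcomb s g (i :: L) = fadd (fscal (s i) (g i)) (fscal 1 (lcomb s g L)).
Proof.
  apply functional_extensionality. intros z. unfold lcomb, fadd, fscal. rewrite lsum_cons. ring.
Qed.

Lemma scalar_linear_lcomb (dom : (D -> R) -> Prop) psi :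
  scalar_linear_on dom psi -> (forall i, dom (g i)) -> (forall L, dom (lcomb s g L)) ->
  forall L, psi (lcomb s g L) = lsum (fun i => s i * psi (g i)) L.
Proof.
  unfold scalar_linear_on, linear_on. intros Hlin Hg Hdom L. induction L as [|i L IH].
  - pose proof (Hlin 0 0 _ _ (Hdom nil) (Hdom nil)) as H0.
    replace (fadd (fscal 0 (lcomb s g nil)) (fscal 0 (lcomb s g nil))) with (lcomb s g nil) in H0.
    + rewrite lsum_nil. lra.
    + apply functional_extensionality. intros z. unfold fadd, fscal, lcomb. rewrite lsum_nil. ring.
  - rewrite lcomb_cons, Hlin, IH, lsum_cons; [ring | apply Hg | apply Hdom].
Qed.

Lemma lcomb_diff_le L x y : (forall i, Rabs (s i) <= 1) ->
  Rabs (lcomb s g L x - lcomb s g L y) <= lsum (fun i => Rabs (g i x - g i y)) L.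
Proof.
  intros Hs. unfold lcomb. rewrite <- lsum_minus.
  eapply Rle_trans; [apply lsum_abs|]. apply lsum_le. intros i.
  replace (s i * g i x - s i * g i y) with (s i * (g i x - g i y)) by ring.
  rewrite Rabs_mult. pose proof (Hs i). pose proof (Rabs_pos (g i x - g i y)). nra.
Qed.

Lemma lcomb_lip0 (d : D -> D -> R) x0 : (forall i, lip0 d x0 (g i)) -> forall L, lip0 d x0 (lcomb s g L).
Proof.
  intros Hg L. induction L as [|i L IH]; [exact (lip0_zero d x0)|].
  rewrite lcomb_cons. apply lip0_comb; [apply Hg | exact IH].
Qed.

End FiniteCombinations.

Definition sign (r : R) : R := if Rle_dec 0 r then 1 else -1.

Lemma sign_mul_self r : sign r * r = Rabs r.
Proof. unfold sign, Rabs. destruct Rle_dec; destruct Rcase_abs; lra. Qed.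

Lemma Rabs_sign_le r : Rabs (sign r) <= 1.
Proof. unfold sign, Rabs. destruct Rle_dec; destruct Rcase_abs; lra. Qed.

Section FreeSpace.

Context {X : Type} (d : X -> X -> R) (x0 : X).
Hypothesis hd : is_metric d.
Implicit Types (f g : X -> R) (c : list (R * X)).

Lemma comb_delta_nil f : comb_delta nil f = 0.
Proof. reflexivity. Qed.

Lemma comb_delta_cons r x c f : comb_delta ((r, x) :: c) f = r * f x + comb_delta c f.
Proof. reflexivity. Qed.

Lemma comb_delta_comb c f g a b :
  comb_delta c (fadd (fscal a f) (fscal b g)) = a * comb_delta c f + b * comb_delta c g.
Proof.
  induction c as [|[r x] c IH]; [rewrite !comb_delta_nil; ring|].
  rewrite !comb_delta_cons, IH. unfold fadd, fscal. ring.
Qed.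

Fixpoint comb_weight (c : list (R * X)) : R :=
  match c with
  | nil => 0
  | (r, x) :: c' => Rabs r * d x x0 + comb_weight c'
  end.

Lemma comb_weight_nonneg c : 0 <= comb_weight c.
Proof.
  induction c as [|[r x] c IH]; simpl; [lra|].
  pose proof (Rabs_pos r). pose proof (metric_nonneg d hd x x0). nra.
Qed.

Lemma comb_delta_bound c f K : f x0 = 0 -> 0 <= K -> lip_le d f K ->
  Rabs (comb_delta c f) <= comb_weight c * K.
Proof.
  intros Hf0 HK Hf. induction c as [|[r x] c IH]; [rewrite comb_delta_nil, Rabs_R0; simpl; lra|].
  rewrite comb_delta_cons. simpl comb_weight.
  assert (Hx : Rabs (f x) <= K * d x x0)
    by (replace (f x) with (f x - f x0) by (rewrite Hf0; ring); apply Hf).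
  pose proof (Rmult_le_compat_l _ _ _ (Rabs_pos r) Hx).
  eapply Rle_trans; [apply Rabs_triang|]. rewrite Rabs_mult. lra.
Qed.

Lemma Fmem_dual_bounded phi : Fmem d x0 phi -> exists C, 0 <= C /\ dual_le d x0 phi C.
Proof.
  intros HF. destruct (HF 1 Rlt_0_1) as [c Hc].
  pose proof (comb_weight_nonneg c).
  exists (1 + comb_weight c). split; [lra|]. intros f K Hf HK Hlf.
  pose proof (Rabs_le_bounds _ _ (Hc f K Hf HK Hlf)).
  pose proof (Rabs_le_bounds _ _ (comb_delta_bound c f K (proj1 Hf) HK Hlf)).
  apply Rabs_le. lra.
Qed.

Lemma Fmem_linear phi : Fmem d x0 phi -> scalar_linear_on (lip0 d x0) phi.
Proof.
  intros HF a b f g Hf Hg. pose proof (lip0_comb d x0 f g a b Hf Hg) as Hh.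
  set (h := fadd (fscal a f) (fscal b g)) in *.
  destruct (lip_le_nonneg d x0 f hd Hf) as [Kf [HKf Hlf]].
  destruct (lip_le_nonneg d x0 g hd Hg) as [Kg [HKg Hlg]].
  destruct (lip_le_nonneg d x0 h hd Hh) as [Kh [HKh Hlh]].
  apply Rminus_diag_uniq, (eq0_of_Rabs_le_eps_mul _ (Kh + Rabs a * Kf + Rabs b * Kg)).
  { pose proof (Rabs_pos a). pose proof (Rabs_pos b). nra. }
  intros e He. destruct (HF e He) as [c Hc].
  pose proof (Hc h Kh Hh HKh Hlh) as Eh. unfold h in Eh. rewrite comb_delta_comb in Eh.
  pose proof (Rmult_le_compat_l _ _ _ (Rabs_pos a) (Hc f Kf Hf HKf Hlf)) as Ef.
  pose proof (Rmult_le_compat_l _ _ _ (Rabs_pos b) (Hc g Kg Hg HKg Hlg)) as Eg.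
  rewrite <- Rabs_mult in Ef, Eg.
  apply Rabs_le_bounds in Eh, Ef, Eg. apply Rabs_le. unfold h. lra.
Qed.

Lemma Fmem_of_comb_delta phi c : (forall f, phi f = comb_delta c f) -> Fmem d x0 phi.
Proof.
  intros H e He. exists c. intros f K _ HK _. rewrite H, Rminus_diag, Rabs_R0.
  apply Rmult_le_pos; lra.
Qed.

Lemma Fmem_delta x : Fmem d x0 (delta x).
Proof.
  apply (Fmem_of_comb_delta _ ((1, x) :: nil)). intros f.
  rewrite comb_delta_cons, comb_delta_nil. unfold delta. ring.
Qed.

Lemma Fmem_delta_comb a x b y : Fmem d x0 (fadd (fscal a (delta x)) (fscal b (delta y))).
Proof.
  apply (Fmem_of_comb_delta _ ((a, x) :: (b, y) :: nil)). intros f.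
  rewrite !comb_delta_cons, comb_delta_nil. unfold fadd, fscal, delta. ring.
Qed.

End FreeSpace.

Definition unit_vec {I : Type} (j : I) : I -> R :=
  fun i => if excluded_middle_informative (i = j) then 1 else 0.

Section SequenceSpaces.

Context {I : Type}.
Implicit Types (i j : I) (v : I -> R).

Lemma unit_vec_same j : unit_vec j j = 1.
Proof. unfold unit_vec. destruct excluded_middle_informative; congruence. Qed.

Lemma unit_vec_other j i : i <> j -> unit_vec j i = 0.
Proof. unfold unit_vec. destruct excluded_middle_informative; congruence. Qed.

Lemma unit_vec_sym i j : unit_vec i j = unit_vec j i.
Proof. unfold unit_vec. do 2 destruct excluded_middle_informative; congruence. Qed.

Lemma unit_vec_iff j v : feq v (unit_vec j) <-> v j = 1 /\ (forall i, i <> j -> v i = 0).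
Proof.
  split.
  - intros H. rewrite H, unit_vec_same. split; [reflexivity|].
    intros i Hi. rewrite H. apply unit_vec_other, Hi.
  - intros [H1 H0] i. destruct (classic (i = j)) as [->|Hi].
    + rewrite unit_vec_same. exact H1.
    + rewrite unit_vec_other by exact Hi. apply H0, Hi.
Qed.

Lemma unit_vec_linf j : linf_le (unit_vec j) 1.
Proof.
  intros i. destruct (classic (i = j)) as [->|Hi].
  - rewrite unit_vec_same, Rabs_R1. lra.
  - rewrite unit_vec_other, Rabs_R0 by exact Hi. lra.
Qed.

Lemma unit_vec_l1 j : l1_le (unit_vec j) 1.
Proof.
  intros L HL. destruct (classic (In j L)) as [Hj|Hj].
  - rewrite (lsum_single _ j L HL Hj).
    + rewrite unit_vec_same, Rabs_R1. lra.
    + intros i Hi. rewrite unit_vec_other, Rabs_R0 by exact Hi. reflexivity.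
  - rewrite lsum_zero; [lra|]. intros i Hi. rewrite unit_vec_other, Rabs_R0; [reflexivity|].
    intros ->. contradiction.
Qed.

Lemma lcomb_unit_vec_notin (s : I -> R) L j : ~ In j L -> lcomb s unit_vec L j = 0.
Proof.
  intros Hj. apply lsum_zero. intros i Hi. rewrite unit_vec_other; [ring|]. intros ->. contradiction.
Qed.

Lemma lcomb_unit_vec_in (s : I -> R) L j : NoDup L -> In j L -> lcomb s unit_vec L j = s j.
Proof.
  intros HL Hj. unfold lcomb. rewrite (lsum_single _ j L HL Hj).
  - rewrite unit_vec_same. ring.
  - intros i Hi. rewrite unit_vec_other; [ring|]. intros ->. apply Hi. reflexivity.
Qed.

Lemma lcomb_unit_vec_linf (s : I -> R) L :
  NoDup L -> (forall i, Rabs (s i) <= 1) -> linf_le (lcomb s unit_vec L) 1.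
Proof.
  intros HL Hs j. destruct (classic (In j L)) as [Hj|Hj].
  - rewrite lcomb_unit_vec_in by assumption. apply Hs.
  - rewrite lcomb_unit_vec_notin, Rabs_R0 by exact Hj. lra.
Qed.

Lemma lcomb_unit_vec_c0 (s : I -> R) L : c0 (lcomb s unit_vec L).
Proof.
  intros e He. exists L. intros j Hj. apply NNPP. intros Hout.
  rewrite lcomb_unit_vec_notin, Rabs_R0 in Hj by exact Hout. lra.
Qed.

Lemma unit_vec_c0 j : c0 (unit_vec j).
Proof.
  intros e He. exists (j :: nil). intros i Hi.
  destruct (classic (i = j)) as [->|Hij]; [left; reflexivity|].
  rewrite unit_vec_other, Rabs_R0 in Hi by exact Hij. lra.
Qed.

Lemma c0_linf v : c0 v -> linf v.
Proof.
  intros H. destruct (H 1 Rlt_0_1) as [L HL]. exists (1 + lsum (fun i => Rabs (v i)) L). intros i.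
  pose proof (lsum_nonneg (fun i => Rabs (v i)) L (fun i => Rabs_pos _)).
  destruct (Rle_dec 1 (Rabs (v i))) as [Hbig|Hsmall]; [|lra].
  pose proof (lsum_in_ge (fun i => Rabs (v i)) L i (fun i => Rabs_pos _) (HL i Hbig)). lra.
Qed.

Lemma linf_le_nonneg v B : inhabited I -> linf_le v B -> 0 <= B.
Proof. intros [i] H. pose proof (Rabs_pos (v i)). specialize (H i). lra. Qed.

Lemma l1_le_coord v c i : l1_le v c -> Rabs (v i) <= c.
Proof.
  intros H. specialize (H (i :: nil) (NoDup_cons _ (@in_nil _ i) (NoDup_nil _))).
  rewrite lsum_cons, lsum_nil, Rplus_0_r in H. exact H.
Qed.

Lemma l1_le_div_iff (u : I -> R) c (D : R) : 0 < D ->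
  l1_le (fun i => u i / D) c <-> forall L, NoDup L -> lsum (fun i => Rabs (u i)) L <= c * D.
Proof.
  intros HD. unfold l1_le. split; intros H L HL; specialize (H L HL).
  - rewrite lsum_div in H by exact HD. apply Rdiv_le_iff; assumption.
  - rewrite lsum_div by exact HD. apply Rdiv_le_iff; assumption.
Qed.

Lemma lsum_abs_mul_le (b u : I -> R) B C L : 0 <= B -> linf_le b B ->
  lsum (fun i => Rabs (u i)) L <= C -> lsum (fun i => Rabs (b i * u i)) L <= B * C.
Proof.
  intros HB Hb HC. eapply Rle_trans; [apply (lsum_le _ (fun i => B * Rabs (u i)))|].
  - intros i. rewrite Rabs_mult. apply Rmult_le_compat_r; [apply Rabs_pos | apply Hb].
  - rewrite lsum_scal. apply Rmult_le_compat_l; assumption.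
Qed.

End SequenceSpaces.

Section InterpolationConstant.

Context {X I : Type} (d : X -> X -> R) (x0 : X) (xs ys : I -> X) (M : R).
Hypothesis hd : is_metric d.
Hypothesis hI : inhabited I.
Hypothesis hxy : forall i, xs i <> ys i.
Hypothesis hM : interp_const d x0 xs ys M.

Lemma interp_const_le C :
  (forall a, linf_le a 1 -> exists f, lip0 d x0 f /\ lip_le d f C /\ feq (Top d xs ys f) a) -> M <= C.
Proof.
  intros H. destruct (Rle_dec 1 C) as [HC|HC]; [apply (proj1 hM); split; assumption|].
  (* the infimum ranges only over K >= 1, but C < 1 cannot interpolate a unit vector *)
  exfalso. destruct hI as [i].
  destruct (H (unit_vec i) (unit_vec_linf i)) as [f [_ [Hf Htop]]].
  specialize (Htop i). rewrite unit_vec_same in Htop. unfold Top in Htop.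
  pose proof (metric_pos d hd _ _ (hxy i)) as Hd.
  assert (E : f (xs i) - f (ys i) = d (xs i) (ys i)).
  { rewrite <- (Rmult_1_l (d (xs i) (ys i))), <- Htop. field. lra. }
  specialize (Hf (xs i) (ys i)). rewrite E, Rabs_pos_eq in Hf by lra. nra.
Qed.

Lemma interp_const_le_op_bound C (A : (I -> R) -> X -> R) :
  (forall a, linf a -> lip0 d x0 (A a)) -> op_bounded linf linf_le (lip_le d) A C ->
  (forall a, linf a -> feq (Top d xs ys (A a)) a) -> M <= C.
Proof.
  intros Hlip HA HT. apply interp_const_le. intros a Ha.
  assert (Ha' : linf a) by (exists 1; exact Ha).
  exists (A a). split; [auto|]. split; [|auto].
  rewrite <- (Rmult_1_r C). apply HA; [exact Ha' | lra | exact Ha].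
Qed.

End InterpolationConstant.

Definition weighted_sum {X I : Type} (fs : I -> X -> R) (b : I -> R) : X -> R :=
  fun x => usum (fun i => b i * fs i x).

Section BeurlingSet.

Context {X I : Type} (d : X -> X -> R) (x0 : X) (xs ys : I -> X) (K : R) (fs : I -> X -> R).
Hypothesis hd : is_metric d.
Hypothesis hI : inhabited I.
Hypothesis hxy : forall i, xs i <> ys i.
Hypothesis hB : beurling_set d x0 xs ys K fs.

Lemma beurling_const_nonneg : 0 <= K.
Proof.
  destruct hI as [i]. destruct hB as [_ [_ Hl1]].
  exact (Hl1 _ _ (hxy i) nil (NoDup_nil _)).
Qed.

Lemma beurling_sum_le x y L : NoDup L -> lsum (fun i => Rabs (fs i x - fs i y)) L <= K * d x y.
Proof.
  intros HL. destruct (classic (x = y)) as [<-|Hne].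
  - rewrite metric_refl, Rmult_0_r by exact hd. rewrite lsum_zero; [lra|].
    intros i _. rewrite Rminus_diag. apply Rabs_R0.
  - destruct hB as [_ [_ Hl1]].
    exact (proj1 (l1_le_div_iff _ K _ (metric_pos d hd x y Hne)) (Hl1 x y Hne) L HL).
Qed.

Lemma beurling_lip0 i : lip0 d x0 (fs i).
Proof.
  split; [apply (proj1 hB)|]. exists K. intros x y.
  pose proof (beurling_sum_le x y (i :: nil) (NoDup_cons _ (@in_nil _ i) (NoDup_nil _))) as H.
  rewrite lsum_cons, lsum_nil, Rplus_0_r in H. exact H.
Qed.

Lemma beurling_Top i : feq (Top d xs ys (fs i)) (unit_vec i).
Proof. apply unit_vec_iff. destruct hB as [_ [HT _]]. apply HT. Qed.

Lemma beurling_diff i j : fs i (xs j) - fs i (ys j) = unit_vec i j * d (xs j) (ys j).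
Proof.
  rewrite <- (beurling_Top i j). unfold Top.
  pose proof (metric_pos d hd _ _ (hxy j)). field. lra.
Qed.

Lemma weighted_sum_has_sum b : linf b -> forall x, has_sum (fun i => b i * fs i x) (weighted_sum fs b x).
Proof.
  intros [B HbB] x. pose proof (linf_le_nonneg b B hI HbB) as HB.
  destruct (has_sum_of_abs_bounded (fun i => b i * fs i x) (B * (K * d x x0))) as [s Hs].
  { intros L HL. apply (lsum_abs_mul_le b (fun i => fs i x)); [exact HB | exact HbB|].
    rewrite (lsum_ext _ (fun i => Rabs (fs i x - fs i x0))).
    - apply beurling_sum_le, HL.
    - intros i. rewrite (proj1 hB i), Rminus_0_r. reflexivity. }
  unfold weighted_sum. rewrite (usum_eq _ s Hs). exact Hs.
Qed.

Lemma weighted_sum_diff b : linf b -> forall x y,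
  has_sum (fun i => b i * (fs i x - fs i y)) (weighted_sum fs b x - weighted_sum fs b y).
Proof.
  intros Hb x y. eapply has_sum_ext; [|apply has_sum_sub; apply weighted_sum_has_sum, Hb].
  intros i. cbv beta. ring.
Qed.

Lemma weighted_sum_lip b B : linf_le b B -> lip_le d (weighted_sum fs b) (K * B).
Proof.
  intros HbB x y. pose proof (linf_le_nonneg b B hI HbB).
  apply (has_sum_Rabs_le (fun i => b i * (fs i x - fs i y))).
  - apply weighted_sum_diff. exists B. exact HbB.
  - intros L HL. replace (K * B * d x y) with (B * (K * d x y)) by ring.
    apply lsum_abs_mul_le; [assumption | assumption | apply beurling_sum_le, HL].
Qed.

Lemma weighted_sum_lip0 b : linf b -> lip0 d x0 (weighted_sum fs b).
Proof.
  intros [B HbB]. split.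
  - unfold weighted_sum. apply usum_eq. eapply has_sum_ext; [|apply has_sum_zero].
    intros i. cbv beta. rewrite (proj1 hB i). ring.
  - exists (K * B). apply weighted_sum_lip, HbB.
Qed.

Lemma weighted_sum_linear : linear_on linf fadd fscal feq fadd fscal (weighted_sum fs).
Proof.
  intros a b u v Hu Hv x.
  change (usum (fun i => fadd (fscal a u) (fscal b v) i * fs i x)
          = a * weighted_sum fs u x + b * weighted_sum fs v x).
  apply usum_eq. eapply has_sum_ext; [|apply has_sum_lin; apply weighted_sum_has_sum; assumption].
  intros i. unfold fadd, fscal. ring.
Qed.

Lemma Top_weighted_sum a : linf a -> feq (Top d xs ys (weighted_sum fs a)) a.
Proof.
  intros Ha j. pose proof (metric_pos d hd _ _ (hxy j)) as Hd.
  assert (Hsingle : has_sum (fun i => a i * (fs i (xs j) - fs i (ys j)))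
                            (a j * (fs j (xs j) - fs j (ys j)))).
  { apply (has_sum_single (fun i => a i * (fs i (xs j) - fs i (ys j)))). intros i Hij.
    rewrite beurling_diff, unit_vec_other; [ring|]. intros ->. apply Hij. reflexivity. }
  unfold Top. rewrite <- (has_sum_unique _ _ _ Hsingle (weighted_sum_diff a Ha (xs j) (ys j))).
  rewrite beurling_diff, unit_vec_same. field. lra.
Qed.

Lemma dual_sum_le psi C : scalar_linear_on (lip0 d x0) psi -> dual_le d x0 psi C ->
  forall L, NoDup L -> lsum (fun i => Rabs (psi (fs i))) L <= C * K.
Proof.
  intros Hlin HC L HL.
  (* test psi on sum_(i in L) sign(psi f_i) f_i, whose Lipschitz constant is at most K *)
  set (s := fun i => sign (psi (fs i))).
  rewrite (lsum_ext _ (fun i => s i * psi (fs i))) by (intros i; symmetry; apply sign_mul_self).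
  rewrite <- (scalar_linear_lcomb s fs _ psi Hlin beurling_lip0 (lcomb_lip0 s fs d x0 beurling_lip0)).
  eapply Rle_trans; [apply Rle_abs|]. apply HC.
  - apply lcomb_lip0, beurling_lip0.
  - exact beurling_const_nonneg.
  - intros x y. eapply Rle_trans; [apply lcomb_diff_le; intros i; apply Rabs_sign_le|].
    apply beurling_sum_le, HL.
Qed.

Lemma Fmem_coeffs_l1 phi : Fmem d x0 phi -> l1 (fun i => phi (fs i)).
Proof.
  intros HF. destruct (Fmem_dual_bounded d x0 hd phi HF) as [C [_ HC]].
  exists (C * K). intros L HL.
  apply (dual_sum_le phi C); [apply Fmem_linear; assumption | exact HC | exact HL].
Qed.

Lemma comb_delta_weighted_sum b c : linf b ->
  has_sum (fun i => b i * comb_delta c (fs i)) (comb_delta c (weighted_sum fs b)).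
Proof.
  intros Hb. induction c as [|[r x] c IH].
  - rewrite comb_delta_nil. eapply has_sum_ext; [|apply has_sum_zero].
    intros i. rewrite comb_delta_nil. ring.
  - rewrite comb_delta_cons.
    replace (r * weighted_sum fs b x + comb_delta c (weighted_sum fs b))
      with (r * weighted_sum fs b x + 1 * comb_delta c (weighted_sum fs b)) by ring.
    eapply has_sum_ext; [|exact (has_sum_lin _ _ _ _ r 1 (weighted_sum_has_sum b Hb x) IH)].
    intros i. cbv beta. rewrite comb_delta_cons. ring.
Qed.

Lemma Fmem_weighted_sum phi b : Fmem d x0 phi -> linf b ->
  has_sum (fun i => b i * phi (fs i)) (phi (weighted_sum fs b)).
Proof.
  intros HF Hb. destruct Hb as [B HbB].
  assert (Hb : linf b) by (exists B; exact HbB).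
  pose proof (linf_le_nonneg b B hI HbB) as HB.
  pose proof beurling_const_nonneg as HK.
  destruct (Fmem_dual_bounded d x0 hd phi HF) as [C [_ HC]].
  destruct (has_sum_of_abs_bounded (fun i => b i * phi (fs i)) (B * (C * K))) as [s Hs].
  { intros L HL. apply lsum_abs_mul_le; [assumption | assumption |].
    apply dual_sum_le; [apply Fmem_linear; assumption | exact HC | exact HL]. }
  replace (phi (weighted_sum fs b)) with s; [exact Hs|].
  (* both sides are dual-norm continuous in phi and agree on finite combinations of point evaluations *)
  apply Rminus_diag_uniq, (eq0_of_Rabs_le_eps_mul _ (2 * (B * K))); [nra|].
  intros e He. destruct (HF e He) as [c Hc].
  set (psi := fun f => phi f - comb_delta c f) in Hc.
  assert (Hpsi : scalar_linear_on (lip0 d x0) psi).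
  { intros a1 a2 f g Hf Hg. unfold psi.
    rewrite (Fmem_linear d x0 hd phi HF a1 a2 f g Hf Hg), comb_delta_comb. ring. }
  assert (E1 : Rabs (s - comb_delta c (weighted_sum fs b)) <= B * (e * K)).
  { apply (has_sum_Rabs_le (fun i => b i * psi (fs i))).
    - eapply has_sum_ext; [|exact (has_sum_sub _ _ _ _ Hs (comb_delta_weighted_sum b c Hb))].
      intros i. unfold psi. ring.
    - intros L HL. apply lsum_abs_mul_le; [assumption | assumption | apply dual_sum_le; assumption]. }
  assert (E2 : Rabs (psi (weighted_sum fs b)) <= e * (K * B)).
  { apply Hc; [apply weighted_sum_lip0, Hb | nra | apply weighted_sum_lip, HbB]. }
  unfold psi in E2. apply Rabs_le_bounds in E1, E2. apply Rabs_le. lra.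
Qed.

Lemma weighted_sum_wstar : wstar_continuous d x0 (weighted_sum fs).
Proof.
  intros a Ha phis eps Hphis He.
  exists (map (fun phi i => phi (fs i)) phis), eps. split; [|split; [exact He|]].
  - intros l Hl. apply in_map_iff in Hl. destruct Hl as [phi [<- Hphi]].
    apply Fmem_coeffs_l1, Hphis, Hphi.
  - intros b Hb Hclose phi Hphi. specialize (Hclose _ (in_map _ _ _ Hphi)).
    rewrite (usum_eq _ (phi (weighted_sum fs b) - phi (weighted_sum fs a))) in Hclose; [exact Hclose|].
    eapply has_sum_ext; [|exact (has_sum_sub _ _ _ _ (Fmem_weighted_sum phi b (Hphis _ Hphi) Hb)
                                             (Fmem_weighted_sum phi a (Hphis _ Hphi) Ha))].
    intros i. cbv beta. ring.
Qed.

End BeurlingSet.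

Lemma beurling_set_const_ge {X I : Type} (d : X -> X -> R) x0 (xs ys : I -> X) M K fs :
  is_metric d -> inhabited I -> (forall i, xs i <> ys i) -> interp_const d x0 xs ys M ->
  beurling_set d x0 xs ys K fs -> M <= K.
Proof.
  intros hd hI hxy hM hB. apply (interp_const_le_op_bound d x0 xs ys M hd hI hxy hM K (weighted_sum fs)).
  - apply (weighted_sum_lip0 d x0 xs ys K fs); assumption.
  - intros b B Hb _ HbB. apply (weighted_sum_lip d x0 xs ys K fs); assumption.
  - apply (Top_weighted_sum d x0 xs ys K fs); assumption.
Qed.

Lemma beurling_set_of_l1_map {X I : Type} (d : X -> X -> R) x0 (xs ys : I -> X) C (f : X -> I -> R) :
  is_metric d -> feq (f x0) (fun _ => 0) ->
  (forall x y, l1_le (fadd (f x) (fscal (-1) (f y))) (C * d x y)) ->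
  (forall i, (f (xs i) i - f (ys i) i) / d (xs i) (ys i) = 1 /\
     forall j, j <> i -> (f (xs i) j - f (ys i) j) / d (xs i) (ys i) = 0) ->
  beurling_set d x0 xs ys C (fun i x => f x i).
Proof.
  intros hd H0 Hlip HT. split; [|split].
  - intros i. apply H0.
  - intros i. apply unit_vec_iff. intros j. unfold Top.
    destruct (classic (j = i)) as [->|Hji].
    + rewrite unit_vec_same. apply HT.
    + rewrite unit_vec_other by exact Hji. apply (proj2 (HT j)). intros ->. apply Hji. reflexivity.
  - intros x y Hxy. apply (l1_le_div_iff _ _ _ (metric_pos d hd x y Hxy)). intros L HL.
    rewrite (lsum_ext _ (fun i => Rabs (fadd (f x) (fscal (-1) (f y)) i))); [exact (Hlip x y L HL)|].
    intros i. unfold fadd, fscal. f_equal. ring.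
Qed.

Lemma Sop_unit_vec {X I : Type} (d : X -> X -> R) (xs ys : I -> X) j :
  Sop d xs ys (unit_vec j)
  = fadd (fscal (/ d (xs j) (ys j)) (delta (xs j))) (fscal (- / d (xs j) (ys j)) (delta (ys j))).
Proof.
  apply functional_extensionality. intros f. unfold Sop. apply usum_eq.
  replace (fadd _ _ f) with (unit_vec j j * molecule d (xs j) (ys j) f)
    by (rewrite unit_vec_same; unfold fadd, fscal, delta, molecule, Rdiv; ring).
  apply (has_sum_single (fun i => unit_vec j i * molecule d (xs i) (ys i) f)).
  intros i Hi. rewrite unit_vec_other by exact Hi. ring.
Qed.

Lemma beurling_set_of_left_inverse {X I : Type} (d : X -> X -> R) x0 (xs ys : I -> X) C P :
  is_metric d -> (forall i, xs i <> ys i) ->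
  linear_on (Fmem d x0) fadd fscal feq fadd fscal P ->
  op_bounded (Fmem d x0) (dual_le d x0) l1_le P C ->
  (forall l, l1 l -> feq (P (Sop d xs ys l)) l) ->
  beurling_set d x0 xs ys C (fun i x => P (delta x) i).
Proof.
  intros hd hxy Hlin Hbd HPS. apply (beurling_set_of_l1_map d x0 xs ys C (fun x => P (delta x)) hd).
  - (* delta x0 has dual norm 0 *)
    intros i. assert (H : l1_le (P (delta x0)) (C * 0)).
    { apply Hbd; [apply Fmem_delta | lra|].
      intros f K Hf _ _. unfold delta. rewrite (proj1 Hf), Rabs_R0. lra. }
    rewrite Rmult_0_r in H. pose proof (Rabs_le_bounds _ _ (l1_le_coord _ _ i H)). lra.
  - intros x y L HL.
    assert (H : l1_le (P (fadd (fscal 1 (delta x)) (fscal (-1) (delta y)))) (C * d x y)).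
    { apply Hbd; [apply Fmem_delta_comb | apply metric_nonneg, hd |].
      intros f K _ _ Hf. unfold fadd, fscal, delta.
      replace (1 * f x + -1 * f y) with (f x - f y) by ring. rewrite Rmult_comm. apply Hf. }
    rewrite (lsum_ext _ (fun i => Rabs (P (fadd (fscal 1 (delta x)) (fscal (-1) (delta y))) i)));
      [exact (H L HL)|].
    intros i. rewrite (Hlin 1 (-1) _ _ (Fmem_delta d x0 x) (Fmem_delta d x0 y)).
    unfold fadd, fscal. f_equal. ring.
  - intros i. pose proof (metric_pos d hd _ _ (hxy i)) as Hd.
    assert (Hcoord : feq (fun j => (P (delta (xs i)) j - P (delta (ys i)) j) / d (xs i) (ys i))
                         (unit_vec i)).
    { intros j. rewrite <- (HPS _ (ex_intro _ 1 (unit_vec_l1 i)) j), Sop_unit_vec.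
      rewrite (Hlin _ _ _ _ (Fmem_delta d x0 (xs i)) (Fmem_delta d x0 (ys i))).
      unfold fadd, fscal. field. lra. }
    apply unit_vec_iff in Hcoord. exact Hcoord.
Qed.

Section Equivalences.

Context {X I : Type} (d : X -> X -> R) (x0 : X) (xs ys : I -> X) (M : R).
Hypothesis hd : is_metric d.
Hypothesis hI : inhabited I.
Hypothesis hxy : forall i, xs i <> ys i.
Hypothesis hM : interp_const d x0 xs ys M.

Lemma cond_i_ii : cond_i d x0 xs ys M -> cond_ii d x0 xs ys M.
Proof.
  intros [fs hB]. exists (weighted_sum fs).
  assert (Hlip0 : forall a, linf a -> lip0 d x0 (weighted_sum fs a))
    by (apply (weighted_sum_lip0 d x0 xs ys M fs); assumption).
  assert (HT : forall a, linf a -> feq (Top d xs ys (weighted_sum fs a)) a)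
    by (apply (Top_weighted_sum d x0 xs ys M fs); assumption).
  split; [exact Hlip0|]. split; [apply (weighted_sum_linear d x0 xs ys M fs); assumption|].
  split; [apply (weighted_sum_wstar d x0 xs ys M fs); assumption|].
  split; [|exact HT]. split.
  - intros b B _ _ HbB. apply (weighted_sum_lip d x0 xs ys M fs); assumption.
  - intros C HC Hbd. apply (Rlt_not_le _ _ HC).
    exact (interp_const_le_op_bound d x0 xs ys M hd hI hxy hM C _ Hlip0 Hbd HT).
Qed.

Lemma cond_ii_v : cond_ii d x0 xs ys M -> cond_v d x0 xs ys M.
Proof.
  intros [R0 [Hlip [Hlin [_ [[Hbd _] HT]]]]]. exists R0.
  split; [intros a Ha; apply Hlip, c0_linf, Ha|].
  split; [intros a b u v Hu Hv; apply Hlin; apply c0_linf; assumption|].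
  split; [intros v c Hv; apply Hbd, c0_linf, Hv|].
  intros a Ha. apply HT, c0_linf, Ha.
Qed.

Lemma cond_v_i : cond_v d x0 xs ys M -> cond_i d x0 xs ys M.
Proof.
  intros [R0 [Hlip [Hlin [Hbd HT]]]]. exists (fun i => R0 (unit_vec i)). split; [|split].
  - intros i. apply (Hlip _ (unit_vec_c0 i)).
  - intros i. apply unit_vec_iff, HT, unit_vec_c0.
  - intros x y Hxy. apply (l1_le_div_iff _ _ _ (metric_pos d hd x y Hxy)). intros L HL.
    (* test R_0 on sum_(i in L) sign(R_0 e_i x - R_0 e_i y) e_i, a c_0 vector of sup norm at most 1 *)
    set (s := fun i => sign (R0 (unit_vec i) x - R0 (unit_vec i) y)).
    assert (Hcomb : forall z, R0 (lcomb s unit_vec L) z = lsum (fun i => s i * R0 (unit_vec i) z) L).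
    { intros z. apply (scalar_linear_lcomb s unit_vec c0 (fun u => R0 u z)).
      - intros a b u v Hu Hv. exact (Hlin a b u v Hu Hv z).
      - exact unit_vec_c0.
      - apply lcomb_unit_vec_c0. }
    pose proof (Hbd _ 1 (lcomb_unit_vec_c0 s L) Rle_0_1
                  (lcomb_unit_vec_linf s L HL (fun i => Rabs_sign_le _)) x y) as Hs.
    rewrite !Hcomb, Rmult_1_r, <- lsum_minus in Hs.
    rewrite (lsum_ext _ (fun i => s i * R0 (unit_vec i) x - s i * R0 (unit_vec i) y)).
    + eapply Rle_trans; [apply Rle_abs | exact Hs].
    + intros i. unfold s. rewrite <- sign_mul_self. ring.
Qed.

Lemma cond_i_iii : cond_i d x0 xs ys M -> cond_iii d x0 xs ys M.
Proof.
  intros [fs hB]. set (P := fun (phi : (X -> R) -> R) i => phi (fs i)).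
  assert (Hlin : linear_on (Fmem d x0) fadd fscal feq fadd fscal P)
    by (intros a b u v _ _ i; reflexivity).
  assert (HPS : forall l, l1 l -> feq (P (Sop d xs ys l)) l).
  { intros l _ j. unfold P, Sop. apply usum_eq.
    replace (l j) with (l j * molecule d (xs j) (ys j) (fs j)).
    - apply (has_sum_single (fun i => l i * molecule d (xs i) (ys i) (fs j))). intros i Hij.
      change (molecule d (xs i) (ys i) (fs j)) with (Top d xs ys (fs j) i).
      rewrite (beurling_Top d x0 xs ys M fs hB j i), unit_vec_other by exact Hij. ring.
    - change (molecule d (xs j) (ys j) (fs j)) with (Top d xs ys (fs j) j).
      rewrite (beurling_Top d x0 xs ys M fs hB j j), unit_vec_same. ring. }
  assert (Hbd : op_bounded (Fmem d x0) (dual_le d x0) l1_le P M).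
  { intros phi c Hphi _ Hc L HL. rewrite Rmult_comm.
    apply (dual_sum_le d x0 xs ys M fs); try assumption. apply Fmem_linear; assumption. }
  exists P. split; [intros phi Hphi; apply (Fmem_coeffs_l1 d x0 xs ys M fs); assumption|].
  split; [exact Hlin|]. split; [|exact HPS]. split; [exact Hbd|].
  intros C HC HbdC. apply (Rlt_not_le _ _ HC).
  apply (beurling_set_const_ge d x0 xs ys M C (fun i x => P (delta x) i)); try assumption.
  apply beurling_set_of_left_inverse; assumption.
Qed.

Lemma cond_iii_i : cond_iii d x0 xs ys M -> cond_i d x0 xs ys M.
Proof.
  intros [P [_ [Hlin [[Hbd _] HPS]]]]. exists (fun i x => P (delta x) i).
  apply beurling_set_of_left_inverse; assumption.
Qed.

Lemma cond_i_iv : cond_i d x0 xs ys M -> cond_iv d x0 xs ys M.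
Proof.
  intros [fs hB]. set (f := fun x i => fs i x).
  assert (Hlip : forall x y, l1_le (fadd (f x) (fscal (-1) (f y))) (M * d x y)).
  { intros x y L HL. unfold f, fadd, fscal.
    rewrite (lsum_ext _ (fun i => Rabs (fs i x - fs i y))) by (intros i; f_equal; ring).
    apply (beurling_sum_le d x0 xs ys M fs); assumption. }
  assert (HT : forall i, (f (xs i) i - f (ys i) i) / d (xs i) (ys i) = 1 /\
                 forall j, j <> i -> (f (xs i) j - f (ys i) j) / d (xs i) (ys i) = 0).
  { intros i. apply (unit_vec_iff i (fun j => (fs j (xs i) - fs j (ys i)) / d (xs i) (ys i))).
    intros j. pose proof (metric_pos d hd _ _ (hxy i)).
    rewrite (beurling_diff d x0 xs ys M fs hd hxy hB j i), unit_vec_sym. field. lra. }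
  exists f. split; [intros i; apply (proj1 hB)|]. split; [|split; [split|exact HT]].
  - intros x. exists (M * d x x0). intros L HL. specialize (Hlip x x0 L HL).
    rewrite (lsum_ext _ (fun i => Rabs (fadd (f x) (fscal (-1) (f x0)) i))); [exact Hlip|].
    intros i. unfold fadd, fscal, f. rewrite (proj1 hB i). f_equal. ring.
  - exact Hlip.
  - intros C HC HlipC. apply (Rlt_not_le _ _ HC).
    apply (beurling_set_const_ge d x0 xs ys M C (fun i x => f x i)); try assumption.
    apply beurling_set_of_l1_map; [assumption | intros i; apply (proj1 hB) | exact HlipC | exact HT].
Qed.

Lemma cond_iv_i : cond_iv d x0 xs ys M -> cond_i d x0 xs ys M.
Proof.
  intros [f [H0 [_ [[Hlip _] HT]]]]. exists (fun i x => f x i).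
  apply beurling_set_of_l1_map; assumption.
Qed.

End Equivalences.

Theorem theorem3p12 (X I : Type) (d : X -> X -> R) (x0 : X) (xs ys : I -> X) (M : R)
  (hd : is_metric d)
  (hI : inhabited I)
  (hxy : forall i, xs i <> ys i)
  (hinterp : lip_interpolating d x0 xs ys)
  (hM : interp_const d x0 xs ys M) :
  (cond_i d x0 xs ys M <-> cond_ii d x0 xs ys M) /\
  (cond_i d x0 xs ys M <-> cond_iii d x0 xs ys M) /\
  (cond_i d x0 xs ys M <-> cond_iv d x0 xs ys M) /\
  (cond_i d x0 xs ys M <-> cond_v d x0 xs ys M).
Proof.
  pose proof (cond_i_ii d x0 xs ys M hd hI hxy hM) as Hi_ii.
  pose proof (cond_ii_v d x0 xs ys M) as Hii_v.
  pose proof (cond_v_i d x0 xs ys M hd) as Hv_i.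
  split; [tauto|]. split; [split; [apply cond_i_iii | apply cond_iii_i]; assumption|].
  split; [split; [apply cond_i_iv | apply cond_iv_i]; assumption|]. tauto.
Qed.
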